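(* Consider the Group Lasso: $\mathbf X\in\mathbb R^{n\times p}$, coefficients partitioned into $G$ groups with fixed weights $w_g>0$, $\widehat{\boldsymbol\beta}=\arg\min_{\boldsymbol\beta}\tfrac12\|\mathbf y-\mathbf X\boldsymbol\beta\|_2^2+\gamma\sum_g w_g\|\boldsymbol\beta_g\|_2$, $\gamma\in(\gamma_l,\gamma_{l+1})$ for consecutive transition points, and $\widehat{df}_\gamma=\mathrm{trace}[(\mathbf I_n+\gamma\mathbf B)^{-1}\mathbf A]$ with $\mathbf A=\mathbf X_{\mathcal A_G}(\mathbf X_{\mathcal A_G}^\top\mathbf X_{\mathcal A_G})^{-1}\mathbf X_{\mathcal A_G}^\top$ and $\mathbf B=\mathbf X_{\mathcal A_G}(\mathbf X_{\mathcal A_G}^\top\mathbf X_{\mathcal A_G})^{-1}\boldsymbol\Pi_{\mathcal A_G}(\mathbf X_{\mathcal A_G}^\top\mathbf X_{\mathcal A_G})^{-1}\mathbf X_{\mathcal A_G}^\top$ (for $\mathbf X^\top\mathbf X=\mathbf I_p$ these reduce to $\mathbf X_{\mathcal A_G}\mathbf X_{\mathcal A_G}^\top$ and $\mathbf X_{\mathcal A_G}\boldsymbol\Pi_{\mathcal A_G}\mathbf X_{\mathcal A_G}^\top$). If every group has cardinality $n_g=1$, then $\widehat{df}_\gamma=|\mathcal A|$, the number of nonzero coefficients of $\widehat{\boldsymbol\beta}$.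
   Context: $\boldsymbol\beta_g,\widehat{\boldsymbol\beta}_g\in\mathbb R^{n_g}$ are group subvectors; $\mathcal A_G=\{g:\|\widehat{\boldsymbol\beta}_g\|_2\ne0\}$ the active groups; $\mathcal A=\{j:\widehat\beta_j\ne0\}$; $\mathbf X_{\mathcal A_G}$ the columns of $\mathbf X$ in active groups, with invertible Gram matrix; $\boldsymbol\Pi_{\mathcal A_G}=\mathrm{blockdiag}_{g\in\mathcal A_G}\big(w_g[\mathbf I_{n_g}/\|\widehat{\boldsymbol\beta}_g\|_2-\widehat{\boldsymbol\beta}_g\widehat{\boldsymbol\beta}_g^\top/\|\widehat{\boldsymbol\beta}_g\|_2^3]\big)$. Transition points are the values of $\gamma>0$ at which the active set changes. *)

From HB Require Import structures.
From mathcomp Require Import all_boot all_order all_algebra.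
From mathcomp Require Import reals.
Set Implicit Arguments. Unset Strict Implicit. Unset Printing Implicit Defensive.
Import Order.TTheory GRing.Theory Num.Theory.
Local Open Scope ring_scope.

Section GroupLasso.
Variables (R : realType) (n p G : nat).
Variable (X : 'M[R]_(n, p)) (y : 'cV[R]_n).
Variable (grp : 'I_p -> 'I_G) (w : 'I_G -> R).

Definition gnorm (b : 'cV[R]_p) (g : 'I_G) : R :=
  Num.sqrt (\sum_(j < p | grp j == g) (b j 0) ^+ 2).

Definition glasso_obj (gamma : R) (b : 'cV[R]_p) : R :=
  2^-1 * (\sum_(i < n) ((y - X *m b) i 0) ^+ 2)
  + gamma * \sum_(g < G) w g * gnorm b g.

Definition is_glasso_solution (gamma : R) (b : 'cV[R]_p) : Prop :=
  forall b' : 'cV[R]_p, glasso_obj gamma b <= glasso_obj gamma b'.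

Definition active_groups (b : 'cV[R]_p) : {set 'I_G} :=
  [set g | gnorm b g != 0].

Definition active_cols (b : 'cV[R]_p) : {set 'I_p} :=
  [set j | grp j \in active_groups b].

Definition active_coefs (b : 'cV[R]_p) : {set 'I_p} :=
  [set j | b j 0 != 0].

Definition XA (b : 'cV[R]_p) : 'M[R]_(n, #|active_cols b|) :=
  \matrix_(i < n, k < #|active_cols b|) X i (enum_val k).

Definition gramA (b : 'cV[R]_p) : 'M[R]_(#|active_cols b|) :=
  (XA b)^T *m XA b.

(* Pi_{A_G}: block-diagonal over active groups, the block of group g being
   w_g [ I / ||b_g|| - b_g b_g^T / ||b_g||^3 ]  (indexed in the order of
   enumeration of the active columns). *)
Definition PiA (b : 'cV[R]_p) : 'M[R]_(#|active_cols b|) :=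
  \matrix_(k < #|active_cols b|, l < #|active_cols b|)
    let j := enum_val k in let j' := enum_val l in
    if grp j == grp j' then
      w (grp j) * ((j == j')%:R / gnorm b (grp j)
                   - b j 0 * b j' 0 / (gnorm b (grp j)) ^+ 3)
    else 0.

Definition Amat (b : 'cV[R]_p) : 'M[R]_n :=
  XA b *m invmx (gramA b) *m (XA b)^T.

Definition Bmat (b : 'cV[R]_p) : 'M[R]_n :=
  XA b *m invmx (gramA b) *m PiA b *m invmx (gramA b) *m (XA b)^T.

Definition df_hat (gamma : R) (b : 'cV[R]_p) : R :=
  \tr (invmx (1%:M + gamma *: Bmat b) *m Amat b).

(* gamma is strictly between two consecutive transition points of the
   solution path: the active set is constant on a neighbourhood of gamma. *)
Definition not_transition_point (path : R -> 'cV[R]_p) (gamma : R) : Prop :=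
  exists2 eps : R, 0 < eps &
    forall gamma' : R, 0 < gamma' -> `|gamma' - gamma| < eps ->
      active_groups (path gamma') = active_groups (path gamma).

End GroupLasso.

(** When every group is a singleton, the group norm of a coefficient is its
    absolute value, so active groups and nonzero coefficients coincide, and
    each 1x1 block of [Pi] is [w (1/|b| - b^2/|b|^3) = 0].  Hence [B = 0] and
    [df = tr A = tr ((X_A^T X_A)^-1 X_A^T X_A) = |A|]. *)
From Pilot Require Import Defs.
From HB Require Import structures.
From mathcomp Require Import all_boot all_order all_algebra.
From mathcomp Require Import reals.
Set Implicit Arguments. Unset Strict Implicit. Unset Printing Implicit Defensive.
Import Order.TTheory GRing.Theory Num.Theory.
Local Open Scope ring_scope.

Lemma fiber_card1_inj (aT rT : finType) (f : aT -> rT) :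
  (forall y, #|[set x | f x == y]| = 1%N) -> injective f.
Proof.
move=> card_fiber x x' fx_eq.
have /card_le1_eqP : (#|[set z | f z == f x']| <= 1)%N by rewrite card_fiber.
by apply; rewrite inE ?fx_eq.
Qed.

Lemma mxtrace_oblique_proj (R : fieldType) (n k : nat)
    (A : 'M[R]_(n, k)) (B : 'M[R]_(k, n)) :
  B *m A \in unitmx -> \tr (A *m invmx (B *m A) *m B) = k%:R.
Proof. by move=> BA_unit; rewrite mxtrace_mulC mulmxA mulmxV ?mxtrace1. Qed.

Lemma inv_norm_sub_sqr_div_cube_eq0 (R : realFieldType) (x : R) :
  x != 0 -> 1 / `|x| - x * x / `|x| ^+ 3 = 0.
Proof.
move=> x_neq0; have nx_neq0 : `|x| != 0 by rewrite normr_eq0.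
by rewrite -expr2 -real_normK ?num_real // (exprSr _ 2) invfM mulrA mulfV
  ?expf_neq0 // subrr.
Qed.

Lemma df_hat_PiA0 (R : realType) (n p G : nat) (X : 'M[R]_(n, p))
    (grp : 'I_p -> 'I_G) (w : 'I_G -> R) (gamma : R) (b : 'cV[R]_p) :
  PiA grp w b = 0 -> gramA X grp b \in unitmx ->
  df_hat X grp w gamma b = #|active_cols grp b|%:R.
Proof.
move=> Pi0 gram_unit.
rewrite /df_hat /Bmat Pi0 mulmx0 !mul0mx scaler0 addr0 invmx1 mul1mx.
exact: mxtrace_oblique_proj.
Qed.

Section SingletonGroups.
Variables (R : realType) (p G : nat) (grp : 'I_p -> 'I_G) (w : 'I_G -> R).
Hypothesis grp_inj : injective grp.

Lemma gnorm_singleton (b : 'cV[R]_p) (j : 'I_p) :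
  Defs.gnorm grp b (grp j) = `|b j 0|.
Proof.
rewrite /Defs.gnorm (big_pred1 j) ?sqrtr_sqr // => j'.
by rewrite /= inj_eq.
Qed.

Lemma active_coefs_singleton (b : 'cV[R]_p) :
  active_coefs b = active_cols grp b.
Proof. by apply/setP => j; rewrite !inE gnorm_singleton normr_eq0. Qed.

Lemma PiA_singleton (b : 'cV[R]_p) : PiA grp w b = 0.
Proof.
apply/matrixP => k l; rewrite !mxE /=.
case: ifP => // /eqP/grp_inj <-; rewrite eqxx gnorm_singleton.
have : enum_val k \in active_cols grp b by apply: enum_valP.
rewrite !inE gnorm_singleton normr_eq0 => bk_neq0.
by rewrite inv_norm_sub_sqr_div_cube_eq0 ?mulr0.
Qed.

End SingletonGroups.

Theorem corollaryS4 (R : realType) (n p G : nat)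
    (X : 'M[R]_(n, p)) (y : 'cV[R]_n)
    (grp : 'I_p -> 'I_G) (w : 'I_G -> R)
    (path : R -> 'cV[R]_p) (gamma : R) :
  (forall g : 'I_G, 0 < w g) ->
  (forall gamma' : R, 0 < gamma' ->
     is_glasso_solution X y grp w gamma' (path gamma')) ->
  0 < gamma ->
  not_transition_point grp path gamma ->
  gramA X grp (path gamma) \in unitmx ->
  (forall g : 'I_G, #|[set j : 'I_p | grp j == g]| = 1%N) ->
  df_hat X grp w gamma (path gamma) = (#|active_coefs (path gamma)|)%:R.
Proof.
move=> _ _ _ _ gram_unit singleton.
have grp_inj := fiber_card1_inj singleton.
rewrite (active_coefs_singleton grp_inj).
exact: df_hat_PiA0 (PiA_singleton w grp_inj _) gram_unit.
Qed.
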